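(* Consider the setting described in the context, with $\beta>0$, budget $C>1$, and $\xi\in(0,C-1]$. Let $\mathcal{L}_\beta^{\lambda}:=\max_{\pi\in\Pi}\mathcal{L}_\beta(\pi,\lambda)$ and let $\lambda^\ast\in\arg\min_{\lambda\ge0}\mathcal{L}_\beta^{\lambda}$ be an optimal dual variable. Then $$0\le\lambda^\ast\le\frac{\mathcal{L}_\beta^{\lambda^\ast}-\mathbb{P}_{(z,l)\sim\underline{\rho}}(\Phi_0(z)=l)}{\xi},$$ and hence the set $\Lambda^\ast$ of all optimal dual variables is bounded.
   Context: Let $\mathcal{Z}$ be a set of inputs and labels $l\in\{0,1\}$. Two judge functions $\Phi_0,\Phi_1:\mathcal{Z}\to\{0,1\}$ are given. The reward is $r(z,a,l)=\mathbb{I}(\Phi_a(z)=l)$ and the cost is $c:\mathcal{Z}\times\{0,1\}\to[0,\infty)$ with $c(z,0)=1$ for all $z$. Let $\rho,\underline{\rho},\overline{\rho}$ be fixed distributions on $\mathcal{Z}\times\{0,1\}$. A policy $\pi$ assigns to each $z$ a distribution $\pi(\cdot\mid z)$ on $\{0,1\}$; $\Pi$ is a class of policies containing the policy $\pi_0$ with $\pi_0(0\mid z)=1$ for all $z$. Entropy: $\mathcal{H}(\pi):=\mathbb{E}_{(z,l)\sim\rho}\big[-\sum_{a}\pi(a\mid z)\log\pi(a\mid z)\big]$. Regularized Lagrangian: $$\mathcal{L}_\beta(\pi,\lambda)=\mathbb{E}_{(z,l)\sim\underline{\rho},a\sim\pi(\cdot\mid z)}[r(z,a,l)]-\lambda\Big(\mathbb{E}_{(z,l)\sim\overline{\rho},a\sim\pi(\cdot\mid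 z)}[c(z,a)]-C\Big)+\beta\Big(\mathcal{H}(\pi)+\tfrac12\lambda^2\Big).$$ *)

From HB Require Import structures.
From mathcomp Require Import all_boot all_order all_algebra.
From mathcomp Require Import all_classical all_reals all_analysis.
Set Implicit Arguments. Unset Strict Implicit. Unset Printing Implicit Defensive.
Import Order.TTheory GRing.Theory Num.Theory.
Local Open Scope classical_set_scope.
Local Open Scope ring_scope.

Section Setting.
Variables (R : realType) (d : measure_display) (Z : measurableType d).

(* A policy pi : Z -> bool -> R; pi z a = pi(a | z); action false = 0, true = 1. *)
Definition is_policy (pi : Z -> bool -> R) : Prop :=
  forall z, (forall a, 0 <= pi z a) /\ pi z false + pi z true = 1.

Definition pi0 : Z -> bool -> R := fun _ a => if a then 0 else 1.

Definition judge (Phi0 Phi1 : Z -> bool) (a : bool) : Z -> bool :=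
  if a then Phi1 else Phi0.

Definition reward (Phi0 Phi1 : Z -> bool) (z : Z) (a l : bool) : R :=
  (judge Phi0 Phi1 a z == l)%:R.

Definition pol_expect (P : probability (Z * bool)%type R) (pi : Z -> bool -> R)
    (f : Z -> bool -> bool -> R) : \bar R :=
  (\int[P]_zl (\sum_(a : bool) pi zl.1 a * f zl.1 a zl.2)%:E)%E.

(* entropy H(pi) = E_{(z,l)~rho}[ - sum_a pi(a|z) log pi(a|z) ]  (ln 0 = 0) *)
Definition entropy (rho : probability (Z * bool)%type R) (pi : Z -> bool -> R) : \bar R :=
  (\int[rho]_zl (- \sum_(a : bool) pi zl.1 a * ln (pi zl.1 a))%:E)%E.

Definition lagrangian (Phi0 Phi1 : Z -> bool) (c : Z -> bool -> R)
    (rho rhou rhoo : probability (Z * bool)%type R) (C beta : R)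
    (pi : Z -> bool -> R) (lam : R) : \bar R :=
  (pol_expect rhou pi (reward Phi0 Phi1)
   - lam%:E * (pol_expect rhoo pi (fun z a _ => c z a) - C%:E)
   + beta%:E * (entropy rho pi + (lam ^+ 2 / 2)%:E))%E.

Definition dual_fun (Phi0 Phi1 : Z -> bool) (c : Z -> bool -> R)
    (rho rhou rhoo : probability (Z * bool)%type R) (C beta : R)
    (Pi : set (Z -> bool -> R)) (lam : R) : \bar R :=
  ereal_sup [set lagrangian Phi0 Phi1 c rho rhou rhoo C beta pi lam | pi in Pi].

Definition opt_duals (Phi0 Phi1 : Z -> bool) (c : Z -> bool -> R)
    (rho rhou rhoo : probability (Z * bool)%type R) (C beta : R)
    (Pi : set (Z -> bool -> R)) : set R :=
  [set lam | 0 <= lam /\ forall mu, 0 <= mu ->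
     (dual_fun Phi0 Phi1 c rho rhou rhoo C beta Pi lam
      <= dual_fun Phi0 Phi1 c rho rhou rhoo C beta Pi mu)%E].

End Setting.

From HB Require Import structures.
From mathcomp Require Import all_boot all_order all_algebra.
From mathcomp Require Import all_classical all_reals all_analysis.
From mathcomp Require Import lra.
Set Implicit Arguments. Unset Strict Implicit. Unset Printing Implicit Defensive.
Import Order.TTheory GRing.Theory Num.Theory.
Local Open Scope classical_set_scope.
Local Open Scope ring_scope.

(** The trivial policy [pi0] is feasible with slack at least [C - 1 >= xi],
    so [L_beta^lam >= P(Phi0 correct) + lam xi] for every [lam >= 0]; on the
    other hand, rewards are at most [1] and the entropy of a binary policy is
    at most [2], so an optimal [lam*] satisfies
    [L_beta^lam* <= L_beta^0 <= 1 + 2 beta]. *)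

Lemma ge0_le_integralT {R : realType} {d} {T : measurableType d}
    (mu : {measure set T -> \bar R}) (f g : T -> \bar R) :
  (forall x, (0 <= f x)%E) -> (forall x, (f x <= g x)%E) ->
  (\int[mu]_x f x <= \int[mu]_x g x)%E.
Proof.
move=> f0 fg; have g0 x := le_trans (f0 x) (fg x).
rewrite !ge0_integralTE //; apply: ge_ereal_sup => _ [h hf <-].
by apply: ereal_sup_ubound; exists h => // x; exact: le_trans (hf x) (fg x).
Qed.

Lemma integral_cst_probability {R : realType} {d} {T : measurableType d}
    (P : probability T R) (r : R) :
  (\int[P]_x (cst r%:E) x = r%:E)%E.
Proof. by rewrite integral_cst //= probability_setT mule1. Qed.

Lemma measurable_fst_eq_snd {d} {T : measurableType d} (f : T -> bool) :
  measurable_fun setT f -> measurable [set x : T * bool | f x.1 = x.2].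
Proof.
move=> mf.
have mfst b : measurable (fst @^-1` (f @^-1` [set b]) : set (T * bool)).
  rewrite -[X in measurable X]setTI; apply: measurable_fst => //.
  by rewrite -[X in measurable X]setTI; exact: mf.
have msnd b : measurable (snd @^-1` [set b] : set (T * bool)).
  by rewrite -[X in measurable X]setTI; exact: measurable_snd.
have -> : [set x : T * bool | f x.1 = x.2] =
    \big[setU/set0]_(b : bool) (fst @^-1` (f @^-1` [set b]) `&` snd @^-1` [set b]).
  rewrite big_bool; apply/seteqP; split => -[x l] /=.
    by case: l => <-; [left | right].
  by case=> -[/= -> ->].
by rewrite big_bool; apply: measurableU; apply: measurableI.
Qed.

Lemma mul_ln_le0 {R : realType} (p : R) : 0 <= p <= 1 -> p * ln p <= 0.
Proof. by case/andP=> p0 p1; rewrite mulr_ge0_le0 // ln_le0. Qed.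

Lemma oppr_mul_ln_le1 {R : realType} (p : R) : 0 <= p -> - (p * ln p) <= 1.
Proof.
rewrite le0r => /orP[/eqP -> | p0]; first by rewrite mul0r oppr0.
rewrite -mulrN -lnV ?posrE // -(mulfV (lt0r_neq0 p0)).
by rewrite ler_wpM2l ?(ltW p0) // ltW // ln_sublinear // invr_gt0.
Qed.

Section RegularizedLagrangian.
Variables (R : realType) (d : measure_display) (Z : measurableType d).
Variables (Phi0 Phi1 : Z -> bool) (c : Z -> bool -> R).
Variables (rho rhou rhoo : probability (Z * bool)%type R) (C beta : R).
Variable Pi : set (Z -> bool -> R).

Local Notation pi0 := (@pi0 R d Z).
Local Notation reward := (reward R Phi0 Phi1).
Local Notation lagrangian := (lagrangian Phi0 Phi1 c rho rhou rhoo C beta).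
Local Notation dual_fun := (dual_fun Phi0 Phi1 c rho rhou rhoo C beta Pi).
Local Notation opt_duals := (opt_duals Phi0 Phi1 c rho rhou rhoo C beta Pi).

Hypothesis mPhi0 : measurable_fun setT Phi0.
Hypothesis cost0 : forall z, c z false = 1.
Hypothesis Pi_policy : forall pi, Pi pi -> is_policy pi.
Hypothesis Pi_pi0 : Pi pi0.
Hypothesis beta_ge0 : 0 <= beta.

Lemma policy_ge0 (pi : Z -> bool -> R) z a : is_policy pi -> 0 <= pi z a.
Proof. by move=> /(_ z) [+ _]; apply. Qed.

Lemma policy_le1 (pi : Z -> bool -> R) z a : is_policy pi -> pi z a <= 1.
Proof.
move=> /(_ z) [pi_ge0 <-]; have := pi_ge0 (~~ a).
by case: a => /=; rewrite ?lerDr ?lerDl.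
Qed.

Lemma pol_expect_pi0 (P : probability (Z * bool)%type R) f :
  pol_expect P pi0 f = (\int[P]_zl (f zl.1 false zl.2)%:E)%E.
Proof.
by apply: eq_integral => zl _; rewrite big_bool /pi0 /= mul0r add0r mul1r.
Qed.

Lemma fin_num_Phi0_correct (P : probability (Z * bool)%type R) :
  P [set zl | Phi0 zl.1 = zl.2] \is a fin_num.
Proof. by rewrite fin_num_measure //; exact: measurable_fst_eq_snd. Qed.

Lemma pol_expect_pi0_reward :
  pol_expect rhou pi0 reward = rhou [set zl | Phi0 zl.1 = zl.2].
Proof.
have mA := measurable_fst_eq_snd mPhi0.
rewrite pol_expect_pi0 -[X in rhou X]setIT -integral_indic //.
apply: eq_integral => -[z l] _; rewrite indicE /reward /=.
by case: eqP => [eql | neql]; [rewrite mem_set | rewrite memNset].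
Qed.

Lemma pol_expect_pi0_cost : pol_expect rhoo pi0 (fun z a _ => c z a) = 1%E.
Proof.
rewrite pol_expect_pi0 -[RHS](integral_cst_probability rhoo 1).
by apply: eq_integral => zl _; rewrite cost0.
Qed.

Lemma entropy_pi0 : entropy rho pi0 = 0%E.
Proof.
rewrite -[RHS](integral_cst_probability rho 0); apply: eq_integral => zl _.
by rewrite big_bool /pi0 /= mul0r add0r mul1r ln1 oppr0.
Qed.

Lemma lagrangian_pi0 lam :
  lagrangian pi0 lam =
  (fine (rhou [set zl | Phi0 zl.1 = zl.2]) + lam * (C - 1)
   + beta * (lam ^+ 2 / 2))%:E.
Proof.
rewrite /lagrangian pol_expect_pi0_reward pol_expect_pi0_cost entropy_pi0 add0e.
rewrite -[rhou _ in LHS](fineK (fin_num_Phi0_correct rhou)).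
by rewrite -EFinB -!EFinM -!EFinD; congr (_%:E); lra.
Qed.

Lemma pol_expect_reward_le1 (P : probability (Z * bool)%type R)
    (pi : Z -> bool -> R) : is_policy pi -> (pol_expect P pi reward <= 1)%E.
Proof.
move=> pol; rewrite -(integral_cst_probability P 1).
apply: ge0_le_integralT => -[z l]; rewrite lee_fin /=.
  by rewrite sumr_ge0 // => a _; rewrite mulr_ge0 ?policy_ge0.
rewrite -(pol z).2 big_bool /= addrC.
by rewrite lerD // ler_piMr ?policy_ge0 // /reward lern1 leq_b1.
Qed.

Lemma entropy_le2 (pi : Z -> bool -> R) :
  is_policy pi -> (entropy rho pi <= 2%:E)%E.
Proof.
move=> pol; rewrite -(integral_cst_probability rho 2).
apply: ge0_le_integralT => -[z l]; rewrite lee_fin big_bool /= opprD.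
  by rewrite addr_ge0 // oppr_ge0 mul_ln_le0 // policy_ge0 // policy_le1.
by rewrite [2]mulr2n lerD // oppr_mul_ln_le1 // policy_ge0.
Qed.

Lemma lagrangian0_le (pi : Z -> bool -> R) : is_policy pi ->
  (lagrangian pi 0 <= (1 + beta * 2)%:E)%E.
Proof.
move=> pol; rewrite /lagrangian mul0e oppe0 adde0 expr0n mul0r adde0.
rewrite EFinD EFinM leeD ?pol_expect_reward_le1 //.
by rewrite lee_wpmul2l ?lee_fin ?entropy_le2.
Qed.

Lemma dual_fun_ge lam :
  ((fine (rhou [set zl | Phi0 zl.1 = zl.2]) + lam * (C - 1))%:E
   <= dual_fun lam)%E.
Proof.
apply: le_trans (ereal_sup_ubound _); last by exists pi0.
by rewrite lagrangian_pi0 lee_fin lerDl mulr_ge0 // divr_ge0 ?sqr_ge0.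
Qed.

Lemma dual_fun0_le : (dual_fun 0 <= (1 + beta * 2)%:E)%E.
Proof.
by apply: ge_ereal_sup => _ [pi /Pi_policy pol <-]; exact: lagrangian0_le.
Qed.

Lemma opt_dual_bound (xi lam : R) : xi <= C - 1 -> lam \in opt_duals ->
  0 <= lam /\ exists x : R, dual_fun lam = x%:E /\
    fine (rhou [set zl | Phi0 zl.1 = zl.2]) + lam * xi <= x <= 1 + beta * 2.
Proof.
move=> xiC; rewrite inE => -[lam0 lam_opt]; split => //.
have ub := le_trans (lam_opt 0 (lexx 0)) dual_fun0_le.
have lb := dual_fun_ge lam.
have /fineK Dlam : dual_fun lam \is a fin_num.
  by rewrite fin_numElt (lt_le_trans _ lb) ?ltNyr // (le_lt_trans ub) ?ltry.
exists (fine (dual_fun lam)); split => //.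
move: lb ub; rewrite -Dlam !lee_fin => lb ->; rewrite andbT.
by apply: le_trans lb; rewrite lerD2l ler_wpM2l.
Qed.

End RegularizedLagrangian.

Theorem lemmaA3 (R : realType) (d : measure_display) (Z : measurableType d)
    (Phi0 Phi1 : Z -> bool) (c : Z -> bool -> R)
    (rho rhou rhoo : probability (Z * bool)%type R)
    (Pi : set (Z -> bool -> R)) (beta C xi lamstar : R) :
  measurable_fun setT Phi0 -> measurable_fun setT Phi1 ->
  (forall z a, 0 <= c z a) -> (forall z, c z false = 1) ->
  (forall a, measurable_fun setT (fun z => c z a)) ->
  (forall pi, Pi pi -> is_policy pi /\ forall a, measurable_fun setT (fun z => pi z a)) ->
  Pi (@pi0 R d Z) ->
  0 < beta -> 1 < C -> 0 < xi -> xi <= C - 1 ->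
  lamstar \in opt_duals Phi0 Phi1 c rho rhou rhoo C beta Pi ->
  (0 <= lamstar /\
   (lamstar%:E <=
     (dual_fun Phi0 Phi1 c rho rhou rhoo C beta Pi lamstar
      - rhou [set zl | Phi0 zl.1 = zl.2]) * (xi^-1)%:E)%E) /\
  (exists M : R, forall lam, lam \in opt_duals Phi0 Phi1 c rho rhou rhoo C beta Pi ->
     0 <= lam <= M).
Proof.
(* Integrals over arbitrary policies are only bounded pointwise, which needs
   no measurability ([ge0_le_integralT]): apart from that of [Phi0], the
   measurability hypotheses are unused, as is [0 <= c]; and [1 < C] follows
   from [0 < xi <= C - 1]. *)
move=> mPhi0 _ _ cost0 _ Pi_policy Pi_pi0 /ltW beta0 _ xi0 xiC lamstar_opt.
have pol pi (Ppi : Pi pi) := (Pi_policy pi Ppi).1.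
have bound lam (lam_opt : lam \in opt_duals Phi0 Phi1 c rho rhou rhoo C beta Pi) :=
  opt_dual_bound mPhi0 cost0 pol Pi_pi0 beta0 xiC lam_opt.
set p := fine (rhou _) in bound.
have rhouA : rhou _ = p%:E := esym (fineK (fin_num_Phi0_correct mPhi0 rhou)).
split.
  have [lamstar0 [x [-> /andP[lb _]]]] := bound lamstar lamstar_opt.
  split => //; rewrite rhouA -EFinB -EFinM lee_fin ler_pdivlMr //; lra.
exists ((1 + beta * 2 - p) / xi) => lam /bound[lam0 [x [_ /andP[lb ub]]]].
by rewrite lam0 ler_pdivlMr //=; lra.
Qed.
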